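(* Let $\mathfrak X^n=(X^n,d^n,\mu^n,\eta^n)$, $n\in\mathbb N$, and $\mathfrak X=(X,d,\mu,\eta)$ be elements of $\mathbb M^{GHPU}$. Then $\mathfrak X^n\to\mathfrak X$ in the GHPU metric if and only if there exist a compact metric space $(W,D)$ and isometric embeddings $X\to W$ and $X^n\to W$, $n\in\mathbb N$, such that, identifying $X$ and $X^n$ with their images, $X^n\to X$ in the $D$-Hausdorff metric, $\mu^n\to\mu$ in the $D$-Prokhorov metric, and $\sup_{t\in\mathbb R}D(\eta^n(t),\eta(t))\to0$.
   Context: $\mathbb M^{GHPU}$ is the set of $(X,d,\mu,\eta)$ with $(X,d)$ compact metric, $\mu$ a finite Borel measure on $X$, $\eta:\mathbb R\to X$ continuous such that for each $\epsilon>0$ there is $T>0$ with $d(\eta(t),\eta(T))\le\epsilon$ and $d(\eta(-t),\eta(-T))\le\epsilon$ for $t\ge T$. The GHPU metric $\mathbb d^{GHPU}(\mathfrak X_1,\mathfrak X_2)$ is the infimum over compact metric spaces $(W,D)$ and isometric embeddings $\iota_i:X_i\to W$ of $\mathbb d^H_D(\iota_1(X_1),\iota_2(X_2))+\mathbb d^P_D((\iota_1)_*\mu_1,(\iota_2)_*\mu_2)+\sup_{t}D(\iota_1\eta_1(t),\iota_2\eta_2(t))$ (Hausdorff and Prokhorov distances). *)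

From Stdlib Require Import Reals.
From Coquelicot Require Import Coquelicot.
Open Scope R_scope.

Record MetricSpace := {
  carrier :> Type;
  dist : carrier -> carrier -> R;
  dist_refl : forall x, dist x x = 0;
  dist_eq0 : forall x y, dist x y = 0 -> x = y;
  dist_sym : forall x y, dist x y = dist y x;
  dist_tri : forall x y z, dist x z <= dist x y + dist y z
}.
Arguments dist {m}.

Definition is_open {X : MetricSpace} (U : X -> Prop) : Prop :=
  forall x, U x -> exists r, 0 < r /\ forall y, dist x y < r -> U y.

Definition compact_space (X : MetricSpace) : Prop :=
  forall (I : Type) (U : I -> X -> Prop),
    (forall i, is_open (U i)) -> (forall x, exists i, U i x) ->
    exists l : list I, forall x, exists i, List.In i l /\ U i x.

Definition sigma_algebra {X : Type} (S : (X -> Prop) -> Prop) : Prop :=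
  S (fun _ => False) /\
  (forall A, S A -> S (fun x => ~ A x)) /\
  (forall A : nat -> X -> Prop, (forall n, S (A n)) -> S (fun x => exists n, A n x)).

Definition borel {X : MetricSpace} (A : X -> Prop) : Prop :=
  forall S : (X -> Prop) -> Prop, sigma_algebra S -> (forall U, is_open U -> S U) -> S A.

(** a finite (real-valued) Borel measure; its values off Borel sets are irrelevant *)
Definition finite_borel_measure {X : MetricSpace} (mu : (X -> Prop) -> R) : Prop :=
  mu (fun _ => False) = 0 /\
  (forall A, borel A -> 0 <= mu A) /\
  (forall A : nat -> X -> Prop, (forall n, borel (A n)) ->
     (forall i j, i <> j -> forall x, A i x -> A j x -> False) ->
     is_series (fun n => mu (A n)) (mu (fun x => exists n, A n x))).

Definition continuous_curve {X : MetricSpace} (eta : R -> X) : Prop :=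
  forall t eps, 0 < eps -> exists delta, 0 < delta /\
    forall s, Rabs (s - t) < delta -> dist (eta s) (eta t) < eps.

Definition tail_condition {X : MetricSpace} (eta : R -> X) : Prop :=
  forall eps, 0 < eps -> exists T, 0 < T /\ forall t, T <= t ->
    dist (eta t) (eta T) <= eps /\ dist (eta (- t)) (eta (- T)) <= eps.

Record GHPU := {
  gspace : MetricSpace;
  gcompact : compact_space gspace;
  gmu : (gspace -> Prop) -> R;
  gmu_meas : finite_borel_measure gmu;
  geta : R -> gspace;
  geta_cont : continuous_curve geta;
  geta_tail : tail_condition geta
}.

Definition isometric_embedding {X W : MetricSpace} (i : X -> W) : Prop :=
  forall x y, dist (i x) (i y) = dist x y.

Definition nbhd {W : MetricSpace} (A : W -> Prop) (e : R) : W -> Prop :=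
  fun w => exists a, A a /\ dist w a < e.

Definition hausdorff_dist {W : MetricSpace} (A B : W -> Prop) : Rbar :=
  Glb_Rbar (fun e => 0 < e /\
    (forall a, A a -> nbhd B e a) /\ (forall b, B b -> nbhd A e b)).

Definition prokhorov_dist {W : MetricSpace} (mu nu : (W -> Prop) -> R) : Rbar :=
  Glb_Rbar (fun e => 0 < e /\ forall A, borel A ->
    mu A <= nu (nbhd A e) + e /\ nu A <= mu (nbhd A e) + e).

Definition pushforward {X W : MetricSpace} (i : X -> W) (mu : (X -> Prop) -> R)
  : (W -> Prop) -> R := fun B => mu (fun x => B (i x)).

Definition image {X W : MetricSpace} (i : X -> W) : W -> Prop :=
  fun w => exists x, i x = w.

Definition sup_curve_dist {W : MetricSpace} (g1 g2 : R -> W) : Rbar :=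
  Lub_Rbar (fun r => exists t, r = dist (g1 t) (g2 t)).

Definition ghpu_dist (X1 X2 : GHPU) : Rbar :=
  Glb_Rbar (fun r => exists (W : MetricSpace) (i1 : gspace X1 -> W) (i2 : gspace X2 -> W),
    compact_space W /\ isometric_embedding i1 /\ isometric_embedding i2 /\
    Rbar_plus (Rbar_plus (hausdorff_dist (image i1) (image i2))
                         (prokhorov_dist (pushforward i1 (gmu X1)) (pushforward i2 (gmu X2))))
              (sup_curve_dist (fun t => i1 (geta X1 t)) (fun t => i2 (geta X2 t)))
    = Finite r).

Definition Rbar_cv0 (u : nat -> Rbar) : Prop :=
  forall eps, 0 < eps -> exists N, forall n, (N <= n)%nat -> Rbar_lt (Rbar_abs (u n)) (Finite eps).

(* If the GHPU distances tend to 0, choose for each n a common embedding of X^n and X whose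
   GHPU sum exceeds the distance by at most 1/(n+1), and record it as the cross metric
   d(x, y) = D(j x, i y) on the disjoint union of X^n and X.  Gluing every X^n to X along these
   cross metrics, with the distance between X^n and X^m given by the shortest path through X,
   produces a single metric space W containing all of them isometrically, in which the Hausdorff,
   Prokhorov and curve distances are controlled by the cross metrics.  W is compact: the X^n
   eventually lie in small neighbourhoods of the compact copy of X, and the remaining finitely
   many X^n are compact.  Conversely, a common embedding is admissible in the infimum defining
   the GHPU distance. *)

From Stdlib Require Import Reals Lra Lia List Classical.
From Stdlib Require Import FunctionalExtensionality PropExtensionality ClassicalEpsilon Eqdep_dec.
From Coquelicot Require Import Coquelicot.
Open Scope R_scope.

Lemma pred_ext {T : Type} (P Q : T -> Prop) : (forall x, P x <-> Q x) -> P = Q.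
Proof.
  intros H. apply functional_extensionality; intros x.
  apply propositional_extensionality, H.
Qed.

Lemma dependent_choice {A : Type} {B : A -> Type} (P : forall a, B a -> Prop) :
  (forall a, exists b, P a b) -> exists f : forall a, B a, forall a, P a (f a).
Proof.
  intros H. exists (fun a => proj1_sig (constructive_indefinite_description _ (H a))).
  intros a. exact (proj2_sig (constructive_indefinite_description _ (H a))).
Qed.

Lemma Glb_Rbar_ge0 (E : R -> Prop) : (forall e, E e -> 0 <= e) -> Rbar_le 0 (Glb_Rbar E).
Proof. intros H. apply (proj2 (Glb_Rbar_correct E)). exact H. Qed.

Lemma Glb_Rbar_le_elem (E : R -> Prop) e : E e -> Rbar_le (Glb_Rbar E) e.
Proof. apply (proj1 (Glb_Rbar_correct E)). Qed.

Lemma Glb_Rbar_lt_elem (E : R -> Prop) g e :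
  Glb_Rbar E = Finite g -> g < e -> exists e', E e' /\ e' < e.
Proof.
  intros Hg Hlt. apply NNPP; intros Hn.
  assert (He : Rbar_le e (Glb_Rbar E)).
  { apply (proj2 (Glb_Rbar_correct E)). intros x Hx. simpl.
    apply Rnot_lt_le. intros Hxe. apply Hn. exists x; auto. }
  rewrite Hg in He. simpl in He. lra.
Qed.

Lemma Lub_Rbar_le_bound (E : R -> Prop) c : (forall x, E x -> x <= c) -> Rbar_le (Lub_Rbar E) c.
Proof. intros H. apply (proj2 (Lub_Rbar_correct E)). exact H. Qed.

Lemma Lub_Rbar_ge_elem (E : R -> Prop) x : E x -> Rbar_le x (Lub_Rbar E).
Proof. apply (proj1 (Lub_Rbar_correct E)). Qed.

Lemma Rbar_plus3_finite (a b c : Rbar) r :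
  Rbar_le 0 a -> Rbar_le 0 b -> Rbar_le 0 c -> Rbar_plus (Rbar_plus a b) c = Finite r ->
  exists x y z, a = Finite x /\ b = Finite y /\ c = Finite z /\
    0 <= x /\ 0 <= y /\ 0 <= z /\ r = x + y + z.
Proof.
  destruct a as [x| |], b as [y| |], c as [z| |]; simpl; try tauto; try discriminate.
  intros Hx Hy Hz E. injection E as <-. exists x, y, z. repeat split; auto.
Qed.

Lemma Rbar_cv0_of_le (u : nat -> Rbar) :
  (forall n, Rbar_le 0 (u n)) ->
  (forall eps, 0 < eps -> exists N, forall n, (N <= n)%nat -> Rbar_le (u n) eps) ->
  Rbar_cv0 u.
Proof.
  intros H0 Hle eps Heps. destruct (Hle (eps / 2)) as [N HN]; [lra|].
  exists N. intros n Hn. specialize (H0 n). specialize (HN n Hn).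
  destruct (u n) as [r| |]; simpl in *; try tauto.
  rewrite Rabs_pos_eq; lra.
Qed.

Lemma Rbar_cv0_finite (u : nat -> Rbar) : Rbar_cv0 u ->
  forall eps, 0 < eps -> exists N, forall n, (N <= n)%nat -> exists r, u n = Finite r /\ r < eps.
Proof.
  intros Hu eps Heps. destruct (Hu eps Heps) as [N HN]. exists N. intros n Hn.
  specialize (HN n Hn). destruct (u n) as [r| |]; simpl in HN; try tauto.
  exists r. split; auto. pose proof (Rle_abs r). lra.
Qed.

Lemma inv_INR_succ_small eps : 0 < eps -> exists N, forall n, (N <= n)%nat -> / (INR n + 1) < eps.
Proof.
  intros Heps. destruct (archimed_cor1 eps Heps) as [N [HN HN0]]. exists N. intros n Hn.
  apply le_INR in Hn. assert (0 < INR N) by (apply lt_0_INR; lia).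
  eapply Rle_lt_trans; [|exact HN]. apply Rinv_le_contravar; lra.
Qed.

Lemma dist_ge0 {X : MetricSpace} (x y : X) : 0 <= dist x y.
Proof. pose proof (dist_tri _ x y x). rewrite dist_refl, (dist_sym _ y x) in H. lra. Qed.

Definition nonexpansive {X W : MetricSpace} (f : X -> W) : Prop :=
  forall x y, dist (f x) (f y) <= dist x y.

Lemma isometric_embedding_nonexpansive {X W : MetricSpace} (f : X -> W) :
  isometric_embedding f -> nonexpansive f.
Proof. intros Hf x y. rewrite Hf. lra. Qed.

Lemma is_open_nbhd {W : MetricSpace} (A : W -> Prop) e : is_open (nbhd A e).
Proof.
  intros w [a [Ha Hwa]]. exists (e - dist w a). split; [lra|].
  intros y Hy. exists a. split; auto.
  pose proof (dist_tri _ y w a). pose proof (dist_sym _ y w). lra.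
Qed.

Lemma is_open_preimage {X W : MetricSpace} (f : X -> W) (U : W -> Prop) :
  nonexpansive f -> is_open U -> is_open (fun x => U (f x)).
Proof.
  intros Hf HU x Hx. destruct (HU _ Hx) as [r [Hr HrU]]. exists r. split; auto.
  intros y Hy. apply HrU. specialize (Hf x y). lra.
Qed.

Lemma borel_open {X : MetricSpace} (U : X -> Prop) : is_open U -> borel U.
Proof. intros HU S _ HS. auto. Qed.

Lemma borel_preimage {X W : MetricSpace} (f : X -> W) (A : W -> Prop) :
  nonexpansive f -> borel A -> borel (fun x => A (f x)).
Proof.
  intros Hf HA S (S0 & SC & SU) HS.
  apply (HA (fun B => S (fun x => B (f x)))).
  - split; [exact S0 | split].
    + intros B HB. exact (SC _ HB).
    + intros B HB. exact (SU (fun n x => B n (f x)) HB).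
  - intros U HU. apply HS, is_open_preimage; auto.
Qed.

Lemma borel_setD {X : MetricSpace} (A B : X -> Prop) :
  borel A -> borel B -> borel (fun x => B x /\ ~ A x).
Proof.
  intros HA HB S HS Ho. pose proof HS as (_ & SC & SU).
  set (C := fun k (x : X) => match k with O => ~ B x | _ => A x end).
  replace (fun x => B x /\ ~ A x) with (fun x => ~ exists k, C k x).
  - apply SC, SU. intros [|k]; unfold C; [apply SC, HB | apply HA]; auto.
  - apply pred_ext; intros x; unfold C; split.
    + intros H. split; [apply NNPP; intros nB; apply H; exists O; auto |].
      intros Ax. apply H. exists 1%nat. auto.
    + intros [Bx nAx] [[|k] Hk]; auto.
Qed.

Lemma is_series_two (a : nat -> R) l :
  is_series a l -> (forall k, (2 <= k)%nat -> a k = 0) -> l = a O + a 1%nat.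
Proof.
  intros Hs Hz. rewrite <- (is_series_unique a l Hs). apply is_series_unique.
  apply (filterlim_ext_loc (fun _ : nat => a O + a 1%nat)); [| apply filterlim_const].
  exists 1%nat. intros n Hn. induction n as [|n IH]; [lia|].
  destruct n as [|n].
  - rewrite sum_Sn, sum_O. reflexivity.
  - rewrite sum_Sn, <- IH, (Hz (S (S n))); [| lia | lia].
    change (plus (a O + a 1%nat) 0) with (a O + a 1%nat + 0). ring.
Qed.

Lemma measure_mono {X : MetricSpace} (mu : (X -> Prop) -> R) (A B : X -> Prop) :
  finite_borel_measure mu -> borel A -> borel B -> (forall x, A x -> B x) -> mu A <= mu B.
Proof.
  intros (mu0 & mu_ge0 & mu_add) HA HB AB.
  pose (C := fun k (x : X) => match k with O => A x | 1%nat => B x /\ ~ A x | _ => False end).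
  assert (HC : forall k, borel (C k)).
  { intros [|[|k]]; unfold C; [exact HA | apply borel_setD; auto | intros S HS _; exact (proj1 HS)]. }
  assert (Hdisj : forall k l, k <> l -> forall x, C k x -> C l x -> False).
  { intros [|[|k]] [|[|l]] Hkl x; unfold C; simpl; try tauto; lia. }
  assert (HBC : B = fun x => exists k, C k x).
  { apply pred_ext; intros x; unfold C; split.
    - intros Bx. destruct (classic (A x)); [exists O | exists 1%nat]; auto.
    - intros [[|[|k]] Hk]; [apply AB | |]; tauto. }
  pose proof (is_series_two _ _ (mu_add C HC Hdisj)) as Hsum.
  rewrite HBC, Hsum by (intros [|[|k]] Hk; [lia | lia | exact mu0]).
  assert (0 <= mu (C 1%nat)) by (apply mu_ge0, HC).
  change (C O) with A. lra.
Qed.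

(* [cross_metric δ] says that [δ], together with the metrics of [Y] and [Z], is a pseudometric
   on the disjoint union of [Y] and [Z]. *)
Definition cross_metric {Y Z : MetricSpace} (δ : Y -> Z -> R) : Prop :=
  (forall y y' z, δ y z <= dist y y' + δ y' z) /\
  (forall y z z', δ y z <= δ y z' + dist z' z) /\
  (forall y y' z, dist y y' <= δ y z + δ y' z) /\
  (forall y z z', dist z z' <= δ y z + δ y z').

Lemma cross_metric_ge0 {Y Z : MetricSpace} (δ : Y -> Z -> R) y z :
  cross_metric δ -> 0 <= δ y z.
Proof. intros (_ & _ & H & _). specialize (H y y z). rewrite dist_refl in H. lra. Qed.

Lemma cross_metric_flip {Y Z : MetricSpace} (δ : Y -> Z -> R) :
  cross_metric δ -> cross_metric (fun z y => δ y z).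
Proof.
  intros (H1 & H2 & H3 & H4). split; [|split; [|split]]; intros a b c.
  - specialize (H2 c a b). rewrite (dist_sym _ a b). lra.
  - specialize (H1 b c a). rewrite (dist_sym _ c b). lra.
  - apply H4.
  - apply H3.
Qed.

Lemma cross_metric_shift {Y Z : MetricSpace} (δ : Y -> Z -> R) c :
  0 <= c -> cross_metric δ -> cross_metric (fun y z => δ y z + c).
Proof.
  intros Hc (H1 & H2 & H3 & H4). split; [|split; [|split]]; intros a b d.
  - specialize (H1 a b d). lra.
  - specialize (H2 a b d). lra.
  - specialize (H3 a b d). lra.
  - specialize (H4 a b d). lra.
Qed.

Lemma cross_metric_embedding {Y Z W : MetricSpace} (j : Y -> W) (i : Z -> W) :
  isometric_embedding j -> isometric_embedding i -> cross_metric (fun y z => dist (j y) (i z)).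
Proof.
  intros Hj Hi. split; [|split; [|split]]; intros a b d.
  - rewrite <- Hj. apply dist_tri.
  - rewrite <- Hi. apply dist_tri.
  - rewrite <- Hj, (dist_sym _ (j b)). apply dist_tri.
  - rewrite <- Hi, (dist_sym _ (j a)). apply dist_tri.
Qed.

Lemma cross_metric_bridge {Y Z : MetricSpace} (y0 : Y) (z0 : Z) :
  cross_metric (fun y z => dist y y0 + 1 + dist z0 z).
Proof.
  split; [|split; [|split]]; intros a b d.
  - pose proof (dist_tri _ a b y0). lra.
  - pose proof (dist_tri _ z0 d b). lra.
  - pose proof (dist_tri _ a y0 b). pose proof (dist_sym _ y0 b). pose proof (dist_ge0 z0 d). lra.
  - pose proof (dist_tri _ b z0 d). pose proof (dist_sym _ b z0). pose proof (dist_ge0 a y0). lra.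
Qed.

Definition cross_nbhd {Y Z : MetricSpace} (δ : Y -> Z -> R) (A : Y -> Prop) (e : R) : Z -> Prop :=
  fun z => exists y, A y /\ δ y z < e.

Lemma is_open_cross_nbhd {Y Z : MetricSpace} (δ : Y -> Z -> R) A e :
  cross_metric δ -> is_open (cross_nbhd δ A e).
Proof.
  intros (_ & H2 & _) z [y [Ay Hyz]]. exists (e - δ y z). split; [lra|].
  intros z' Hz'. exists y. split; auto. specialize (H2 y z' z). lra.
Qed.

Lemma cross_nbhd_shift {Y Z : MetricSpace} (δ : Y -> Z -> R) A e c :
  cross_nbhd (fun y z => δ y z + c) A (e + c) = cross_nbhd δ A e.
Proof.
  apply pred_ext; intros z. split; intros [y [Ay Hyz]]; exists y; split; auto; lra.
Qed.

Lemma measure_cross_nbhd_mono {Y Z : MetricSpace} (δ : Y -> Z -> R) (nu : (Z -> Prop) -> R) A e e' :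
  cross_metric δ -> finite_borel_measure nu -> e <= e' ->
  nu (cross_nbhd δ A e) <= nu (cross_nbhd δ A e').
Proof.
  intros Hδ Hnu Hee'. apply measure_mono; auto using borel_open, is_open_cross_nbhd.
  intros z [y [Ay Hyz]]. exists y. split; auto. lra.
Qed.

(* The three terms of the GHPU distance being below [e], expressed through a cross metric. *)
Definition ghpu_close (G X : GHPU) (δ : gspace G -> gspace X -> R) (e : R) : Prop :=
  (forall x, exists y, δ x y < e) /\ (forall y, exists x, δ x y < e) /\
  (forall t, δ (geta G t) (geta X t) < e) /\
  (forall A, borel A -> gmu G A <= gmu X (cross_nbhd δ A e) + e) /\
  (forall B, borel B -> gmu X B <= gmu G (cross_nbhd (fun y x => δ x y) B e) + e).

Lemma ghpu_close_mono G X δ e e' :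
  cross_metric δ -> ghpu_close G X δ e -> e <= e' -> ghpu_close G X δ e'.
Proof.
  intros Hδ (P1 & P2 & P3 & P4 & P5) Hee'. split; [|split; [|split; [|split]]].
  - intros x. destruct (P1 x) as [y Hy]. exists y. lra.
  - intros y. destruct (P2 y) as [x Hx]. exists x. lra.
  - intros t. specialize (P3 t). lra.
  - intros A HA. specialize (P4 A HA).
    pose proof (measure_cross_nbhd_mono δ (gmu X) A e e' Hδ (gmu_meas X) Hee'). lra.
  - intros B HB. specialize (P5 B HB).
    pose proof (measure_cross_nbhd_mono _ (gmu G) B e e' (cross_metric_flip δ Hδ) (gmu_meas G) Hee').
    lra.
Qed.

Lemma ghpu_close_shift G X δ e c :
  0 <= c -> ghpu_close G X δ e -> ghpu_close G X (fun x y => δ x y + c) (e + c).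
Proof.
  intros Hc (P1 & P2 & P3 & P4 & P5). split; [|split; [|split; [|split]]].
  - intros x. destruct (P1 x) as [y Hy]. exists y. lra.
  - intros y. destruct (P2 y) as [x Hx]. exists x. lra.
  - intros t. specialize (P3 t). lra.
  - intros A HA. rewrite cross_nbhd_shift. specialize (P4 A HA). lra.
  - intros B HB. rewrite (cross_nbhd_shift (fun y x => δ x y)). specialize (P5 B HB). lra.
Qed.

Lemma hausdorff_dist_ge0 {W : MetricSpace} (A B : W -> Prop) : Rbar_le 0 (hausdorff_dist A B).
Proof. apply Glb_Rbar_ge0. intros e [He _]. lra. Qed.

Lemma prokhorov_dist_ge0 {W : MetricSpace} (mu nu : (W -> Prop) -> R) :
  Rbar_le 0 (prokhorov_dist mu nu).
Proof. apply Glb_Rbar_ge0. intros e [He _]. lra. Qed.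

Lemma sup_curve_dist_ge0 {W : MetricSpace} (g1 g2 : R -> W) : Rbar_le 0 (sup_curve_dist g1 g2).
Proof.
  eapply Rbar_le_trans; [| apply Lub_Rbar_ge_elem; exists 0; reflexivity].
  apply dist_ge0.
Qed.

Lemma ghpu_dist_ge0 (G X : GHPU) : Rbar_le 0 (ghpu_dist G X).
Proof.
  apply Glb_Rbar_ge0. intros e (W & j & i & _ & _ & _ & Hsum).
  destruct (Rbar_plus3_finite _ _ _ _ (hausdorff_dist_ge0 _ _) (prokhorov_dist_ge0 _ _)
              (sup_curve_dist_ge0 _ _) Hsum) as (h & p & s & _ & _ & _ & ? & ? & ? & ->).
  lra.
Qed.

Lemma ghpu_dist_le_embedding (G X : GHPU) (W : MetricSpace) (j : gspace G -> W) (i : gspace X -> W)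
    h p s :
  compact_space W -> isometric_embedding j -> isometric_embedding i ->
  hausdorff_dist (image j) (image i) = Finite h ->
  prokhorov_dist (pushforward j (gmu G)) (pushforward i (gmu X)) = Finite p ->
  sup_curve_dist (fun t => j (geta G t)) (fun t => i (geta X t)) = Finite s ->
  Rbar_le (ghpu_dist G X) (h + p + s).
Proof.
  intros HW Hj Hi Eh Ep Es. apply Glb_Rbar_le_elem.
  exists W, j, i. repeat split; auto. rewrite Eh, Ep, Es. reflexivity.
Qed.

(* Pass through the [(e - e')]-neighbourhood of [j A] in [W], then its [e']-neighbourhood. *)
Lemma measure_le_cross_nbhd {Y Z W : MetricSpace} (j : Y -> W) (i : Z -> W)
    (mu : (Y -> Prop) -> R) (nu : (Z -> Prop) -> R) e' e :
  isometric_embedding j -> isometric_embedding i ->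
  finite_borel_measure mu -> finite_borel_measure nu -> e' < e ->
  (forall B, borel B -> pushforward j mu B <= pushforward i nu (nbhd B e') + e') ->
  forall A, borel A -> mu A <= nu (cross_nbhd (fun y z => dist (j y) (i z)) A e) + e.
Proof.
  intros Hj Hi Hmu Hnu He'e Hprok A HA.
  set (B := nbhd (fun w => exists a, A a /\ j a = w) (e - e')).
  assert (HB : is_open B) by apply is_open_nbhd.
  specialize (Hprok B (borel_open _ HB)). unfold pushforward in Hprok.
  assert (mu A <= mu (fun y => B (j y))).
  { apply measure_mono; auto.
    - apply borel_open, is_open_preimage; auto using isometric_embedding_nonexpansive.
    - intros y Ay. exists (j y). split; [exists y; auto | rewrite dist_refl; lra]. }
  assert (nu (fun z => nbhd B e' (i z)) <= nu (cross_nbhd (fun y z => dist (j y) (i z)) A e)).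
  { apply measure_mono; auto.
    - apply borel_open, is_open_preimage; auto using isometric_embedding_nonexpansive, is_open_nbhd.
    - apply borel_open, is_open_cross_nbhd, cross_metric_embedding; auto.
    - intros z [b [[w [[a [Aa <-]] Hba]] Hzb]]. exists a. split; auto.
      pose proof (dist_tri _ (j a) b (i z)).
      rewrite (dist_sym _ b (j a)) in Hba. rewrite (dist_sym _ (i z) b) in Hzb. lra. }
  lra.
Qed.

Lemma ghpu_close_of_sum_lt (G X : GHPU) (W : MetricSpace) (j : gspace G -> W) (i : gspace X -> W)
    r e :
  isometric_embedding j -> isometric_embedding i ->
  Rbar_plus (Rbar_plus (hausdorff_dist (image j) (image i))
                       (prokhorov_dist (pushforward j (gmu G)) (pushforward i (gmu X))))
            (sup_curve_dist (fun t => j (geta G t)) (fun t => i (geta X t))) = Finite r ->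
  r < e -> ghpu_close G X (fun x y => dist (j x) (i y)) e.
Proof.
  intros Hj Hi Hsum Hr.
  destruct (Rbar_plus3_finite _ _ _ _ (hausdorff_dist_ge0 _ _) (prokhorov_dist_ge0 _ _)
              (sup_curve_dist_ge0 _ _) Hsum) as (h & p & s & Eh & Ep & Es & Hh & Hp & Hs & ->).
  destruct (Glb_Rbar_lt_elem _ h e Eh) as [e1 [[_ [Hji Hij]] He1]]; [lra|].
  destruct (Glb_Rbar_lt_elem _ p e Ep) as [e2 [[_ Hprok] He2]]; [lra|].
  split; [|split; [|split; [|split]]].
  - intros x. destruct (Hji (j x) (ex_intro _ x eq_refl)) as [w [[y <-] Hd]]. exists y. lra.
  - intros y. destruct (Hij (i y) (ex_intro _ y eq_refl)) as [w [[x <-] Hd]]. exists x.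
    rewrite dist_sym. lra.
  - intros t. assert (Hle : Rbar_le (dist (j (geta G t)) (i (geta X t))) s).
    { rewrite <- Es. apply Lub_Rbar_ge_elem. exists t. reflexivity. }
    simpl in Hle. lra.
  - apply (measure_le_cross_nbhd j i _ _ e2); auto using gmu_meas.
    intros B HB. apply Hprok, HB.
  - replace (fun y x => dist (j x) (i y)) with (fun y x => dist (i y) (j x))
      by (do 2 (apply functional_extensionality; intro); apply dist_sym).
    apply (measure_le_cross_nbhd i j _ _ e2); auto using gmu_meas.
    intros B HB. apply Hprok, HB.
Qed.

Lemma near_optimal_cross_metric (G X : GHPU) h : 0 < h ->
  exists δ : gspace G -> gspace X -> R, cross_metric δ /\
    forall g, ghpu_dist G X = Finite g -> ghpu_close G X δ (g + h).
Proof.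
  intros Hh. destruct (ghpu_dist G X) as [g| |] eqn:Eg.
  - destruct (Glb_Rbar_lt_elem _ g (g + h) Eg) as [r [(W & j & i & _ & Hj & Hi & Hsum) Hr]];
      [lra|].
    exists (fun x y => dist (j x) (i y)). split; [apply cross_metric_embedding; auto|].
    intros g' Eg'. injection Eg' as <-. exact (ghpu_close_of_sum_lt G X W j i r _ Hj Hi Hsum Hr).
  (* [ghpu_dist] is never infinite, but any cross metric serves in that case. *)
  all: exists (fun x y => dist x (geta G 0) + 1 + dist (geta X 0) y).
  all: split; [apply cross_metric_bridge | discriminate].
Qed.

Lemma pushforward_le_nbhd {Y Z W : MetricSpace} (j : Y -> W) (i : Z -> W)
    (mu : (Y -> Prop) -> R) (nu : (Z -> Prop) -> R) e :
  isometric_embedding j -> isometric_embedding i -> finite_borel_measure nu ->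
  (forall A, borel A -> mu A <= nu (cross_nbhd (fun y z => dist (j y) (i z)) A e) + e) ->
  forall B, borel B -> pushforward j mu B <= pushforward i nu (nbhd B e) + e.
Proof.
  intros Hj Hi Hnu Hclose B HB. unfold pushforward.
  specialize (Hclose _ (borel_preimage j B (isometric_embedding_nonexpansive j Hj) HB)).
  assert (nu (cross_nbhd (fun y z => dist (j y) (i z)) (fun y => B (j y)) e)
          <= nu (fun z => nbhd B e (i z))).
  { apply measure_mono; auto.
    - apply borel_open, is_open_cross_nbhd, cross_metric_embedding; auto.
    - apply borel_open, is_open_preimage; auto using isometric_embedding_nonexpansive, is_open_nbhd.
    - intros z [y [By Hyz]]. exists (j y). rewrite dist_sym. auto. }
  lra.
Qed.

Section EmbeddedClose.
Variables (G X : GHPU) (W : MetricSpace) (j : gspace G -> W) (i : gspace X -> W) (e : R).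
Hypothesis e_pos : 0 < e.
Hypothesis close : ghpu_close G X (fun x y => dist (j x) (i y)) e.

Lemma hausdorff_dist_le_of_close : Rbar_le (hausdorff_dist (image j) (image i)) e.
Proof.
  destruct close as (P1 & P2 & _). apply Glb_Rbar_le_elem. split; [exact e_pos | split].
  - intros w [x <-]. destruct (P1 x) as [y Hy]. exists (i y). split; [exists y|]; auto.
  - intros w [y <-]. destruct (P2 y) as [x Hx]. exists (j x). rewrite dist_sym.
    split; [exists x|]; auto.
Qed.

Lemma sup_curve_dist_le_of_close :
  Rbar_le (sup_curve_dist (fun t => j (geta G t)) (fun t => i (geta X t))) e.
Proof.
  destruct close as (_ & _ & P3 & _). apply Lub_Rbar_le_bound.
  intros r [t ->]. apply Rlt_le, P3.
Qed.

Hypotheses (Hj : isometric_embedding j) (Hi : isometric_embedding i).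

Lemma prokhorov_dist_le_of_close :
  Rbar_le (prokhorov_dist (pushforward j (gmu G)) (pushforward i (gmu X))) e.
Proof.
  destruct close as (_ & _ & _ & P4 & P5). apply Glb_Rbar_le_elem. split; [exact e_pos|].
  intros B HB. split.
  - apply (pushforward_le_nbhd j i); auto using gmu_meas.
  - apply (pushforward_le_nbhd i j); auto using gmu_meas.
    intros A HA. specialize (P5 A HA).
    replace (fun y x => dist (i y) (j x)) with (fun y x => dist (j x) (i y))
      by (do 2 (apply functional_extensionality; intro); apply dist_sym).
    exact P5.
Qed.

End EmbeddedClose.

Section Gluing.
Variables (Y : nat -> MetricSpace) (Z : MetricSpace) (z0 : Z).
Variables (δ : forall n, Y n -> Z -> R) (c : nat -> R).
Hypothesis c_pos : forall n, 0 < c n.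
(* Keeps the pieces apart, so that the glued pseudometric is a metric. *)
Hypothesis c_le_δ : forall n y z, c n <= δ n y z.
Hypothesis δ_cross : forall n, cross_metric (δ n).

Definition inf_Z (f : Z -> R) : R := real (Glb_Rbar (fun r => exists z, r = f z)).

Lemma inf_Z_glb (f : Z -> R) : (forall z, 0 <= f z) ->
  (forall z, inf_Z f <= f z) /\ (forall b, (forall z, b <= f z) -> b <= inf_Z f).
Proof.
  intros Hf. unfold inf_Z. destruct (Glb_Rbar_correct (fun r => exists z, r = f z)) as [Hlb Hglb].
  assert (Hge : forall b, (forall z, b <= f z) ->
            Rbar_le b (Glb_Rbar (fun r => exists z, r = f z))).
  { intros b Hb. apply Hglb. intros r [z ->]. apply Hb. }
  assert (Hle : forall z, Rbar_le (Glb_Rbar (fun r => exists z, r = f z)) (f z)).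
  { intros z. apply Hlb. exists z. reflexivity. }
  pose proof (Hge 0 Hf) as H0. pose proof (Hle z0) as Hz0.
  destruct (Glb_Rbar (fun r => exists z, r = f z)); simpl in *; tauto.
Qed.

Lemma δ_ge0 n y z : 0 <= δ n y z.
Proof. apply (cross_metric_ge0 _ y z (δ_cross n)). Qed.

Definition dist_via_Z n m (y : Y n) (y' : Y m) : R := inf_Z (fun z => δ n y z + δ m y' z).

Lemma δ_add_ge0 n m (y : Y n) (y' : Y m) z : 0 <= δ n y z + δ m y' z.
Proof. pose proof (δ_ge0 n y z). pose proof (δ_ge0 m y' z). lra. Qed.

Lemma dist_via_Z_le n m (y : Y n) (y' : Y m) z : dist_via_Z n m y y' <= δ n y z + δ m y' z.
Proof. apply (proj1 (inf_Z_glb _ (δ_add_ge0 n m y y'))). Qed.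

Lemma dist_via_Z_ge n m (y : Y n) (y' : Y m) b :
  (forall z, b <= δ n y z + δ m y' z) -> b <= dist_via_Z n m y y'.
Proof. apply (proj2 (inf_Z_glb _ (δ_add_ge0 n m y y'))). Qed.

Lemma dist_via_Z_sym n m (y : Y n) (y' : Y m) : dist_via_Z n m y y' = dist_via_Z m n y' y.
Proof.
  unfold dist_via_Z. f_equal. apply functional_extensionality. intros z. ring.
Qed.

Lemma dist_via_Z_add_ge n m k l (y : Y n) (y' : Y m) (u : Y k) (u' : Y l) b :
  (forall z z', b <= δ n y z + δ m y' z + (δ k u z' + δ l u' z')) ->
  b <= dist_via_Z n m y y' + dist_via_Z k l u u'.
Proof.
  intros H.
  assert (Hz' : forall z', b - (δ k u z' + δ l u' z') <= dist_via_Z n m y y').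
  { intros z'. apply dist_via_Z_ge. intros z. specialize (H z z'). lra. }
  assert (b - dist_via_Z n m y y' <= dist_via_Z k l u u').
  { apply dist_via_Z_ge. intros z'. specialize (Hz' z'). lra. }
  lra.
Qed.

Definition dist_YY n m (y : Y n) (y' : Y m) : R :=
  match Nat.eq_dec n m with
  | left e => dist (eq_rect n Y y m e) y'
  | right _ => dist_via_Z n m y y'
  end.

Lemma dist_YY_same n (y y' : Y n) : dist_YY n n y y' = dist y y'.
Proof.
  unfold dist_YY. destruct (Nat.eq_dec n n) as [e|e]; [|congruence].
  rewrite (UIP_dec Nat.eq_dec e eq_refl). reflexivity.
Qed.

Lemma dist_YY_diff n m (y : Y n) (y' : Y m) : n <> m -> dist_YY n m y y' = dist_via_Z n m y y'.
Proof. intros H. unfold dist_YY. destruct (Nat.eq_dec n m); [congruence | reflexivity]. Qed.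

Lemma dist_YY_sym n m (y : Y n) (y' : Y m) : dist_YY n m y y' = dist_YY m n y' y.
Proof.
  destruct (Nat.eq_dec n m) as [<-|nm].
  - rewrite !dist_YY_same. apply dist_sym.
  - rewrite !dist_YY_diff by auto. apply dist_via_Z_sym.
Qed.

Lemma dist_YY_le_δ n m (y : Y n) (y' : Y m) z : dist_YY n m y y' <= δ n y z + δ m y' z.
Proof.
  destruct (Nat.eq_dec n m) as [<-|nm].
  - rewrite dist_YY_same. apply (δ_cross n).
  - rewrite dist_YY_diff by auto. apply dist_via_Z_le.
Qed.

Lemma δ_le_dist_YY n m (y : Y n) (y' : Y m) z : δ m y' z <= δ n y z + dist_YY n m y y'.
Proof.
  destruct (δ_cross m) as (H1 & _). destruct (Nat.eq_dec n m) as [<-|nm].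
  - rewrite dist_YY_same, dist_sym. specialize (H1 y' y z). lra.
  - rewrite dist_YY_diff by auto.
    assert (δ m y' z - δ n y z <= dist_via_Z n m y y'); [|lra].
    apply dist_via_Z_ge. intros z'. destruct (δ_cross m) as (_ & H2 & _).
    destruct (δ_cross n) as (_ & _ & _ & H4).
    specialize (H2 y' z z'). specialize (H4 y z' z). lra.
Qed.

Lemma dist_YY_tri n m k (y : Y n) (y' : Y m) (y'' : Y k) :
  dist_YY n k y y'' <= dist_YY n m y y' + dist_YY m k y' y''.
Proof.
  destruct (Nat.eq_dec n m) as [<-|nm].
  - rewrite (dist_YY_same n). destruct (Nat.eq_dec n k) as [<-|nk].
    + rewrite !dist_YY_same. apply dist_tri.
    + rewrite !dist_YY_diff by auto.
      assert (dist_via_Z n k y y'' - dist y y' <= dist_via_Z n k y' y''); [|lra].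
      apply dist_via_Z_ge. intros z. pose proof (dist_via_Z_le n k y y'' z).
      destruct (δ_cross n) as (H1 & _). specialize (H1 y y' z). lra.
  - rewrite (dist_YY_diff n m) by auto. destruct (Nat.eq_dec m k) as [<-|mk].
    + rewrite dist_YY_same, dist_YY_diff by auto.
      assert (dist_via_Z n m y y'' - dist y' y'' <= dist_via_Z n m y y'); [|lra].
      apply dist_via_Z_ge. intros z. pose proof (dist_via_Z_le n m y y'' z).
      destruct (δ_cross m) as (H1 & _). specialize (H1 y'' y' z).
      rewrite (dist_sym _ y'' y') in H1. lra.
    + rewrite (dist_YY_diff m k) by auto.
      destruct (δ_cross m) as (_ & _ & _ & H4). destruct (δ_cross k) as (_ & H2 & _).
      apply dist_via_Z_add_ge. intros z z'.
      pose proof (dist_YY_le_δ n k y y'' z). specialize (H2 y'' z z'). specialize (H4 y' z' z).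
      lra.
Qed.

Definition glued_carrier : Type := (Z + {n : nat & Y n})%type.

Definition glued_dist (a b : glued_carrier) : R :=
  match a, b with
  | inl z, inl z' => dist z z'
  | inl z, inr (existT n y) => δ n y z
  | inr (existT n y), inl z => δ n y z
  | inr (existT n y), inr (existT m y') => dist_YY n m y y'
  end.

Lemma glued_dist_refl a : glued_dist a a = 0.
Proof. destruct a as [z|[n y]]; simpl; [|rewrite dist_YY_same]; apply dist_refl. Qed.

Lemma glued_dist_sym a b : glued_dist a b = glued_dist b a.
Proof.
  destruct a as [z|[n y]], b as [z'|[m y']]; simpl; auto using dist_sym, dist_YY_sym.
Qed.

Lemma glued_dist_eq0 a b : glued_dist a b = 0 -> a = b.
Proof.
  destruct a as [z|[n y]], b as [z'|[m y']]; simpl; intros H.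
  - f_equal. apply dist_eq0, H.
  - pose proof (c_le_δ m y' z). pose proof (c_pos m). lra.
  - pose proof (c_le_δ n y z'). pose proof (c_pos n). lra.
  - destruct (Nat.eq_dec n m) as [<-|nm].
    + rewrite dist_YY_same in H. apply dist_eq0 in H. subst. reflexivity.
    + rewrite dist_YY_diff in H by auto.
      assert (c n + c m <= dist_via_Z n m y y').
      { apply dist_via_Z_ge. intros z. pose proof (c_le_δ n y z). pose proof (c_le_δ m y' z). lra. }
      pose proof (c_pos n). pose proof (c_pos m). lra.
Qed.

Lemma glued_dist_tri a b d : glued_dist a d <= glued_dist a b + glued_dist b d.
Proof.
  destruct a as [z1|[n y1]], b as [z2|[m y2]], d as [z3|[k y3]]; simpl.
  - apply dist_tri.
  - destruct (δ_cross k) as (_ & H2 & _). specialize (H2 y3 z1 z2).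
    rewrite (dist_sym _ z1 z2). lra.
  - apply (δ_cross m).
  - apply δ_le_dist_YY.
  - apply (δ_cross n).
  - apply dist_YY_le_δ.
  - rewrite dist_YY_sym. pose proof (δ_le_dist_YY m n y2 y1 z3). lra.
  - apply dist_YY_tri.
Qed.

Definition glued : MetricSpace :=
  Build_MetricSpace glued_carrier glued_dist glued_dist_refl glued_dist_eq0 glued_dist_sym
    glued_dist_tri.

Lemma glued_inl_isometric : isometric_embedding (fun z : Z => inl z : glued).
Proof. intros z z'. reflexivity. Qed.

Lemma glued_inr_isometric n : isometric_embedding (fun y : Y n => inr (existT _ n y) : glued).
Proof. intros y y'. apply dist_YY_same. Qed.

Lemma list_lower_bound {J : Type} (f : J -> R) (l : list J) :
  exists rho, 0 < rho /\ forall p, In p l -> 0 < f p -> rho <= f p.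
Proof.
  induction l as [|p l [rho [Hrho IH]]].
  - exists 1. split; [lra | intros p []].
  - destruct (Rlt_dec 0 (f p)) as [Hp|Hp].
    + exists (Rmin rho (f p)). split; [apply Rmin_pos; lra|].
      intros q [<-|Hq] Hfq; [apply Rmin_r|].
      pose proof (IH q Hq Hfq). pose proof (Rmin_l rho (f p)). lra.
    + exists rho. split; auto. intros q [<-|Hq] Hfq; [lra | auto].
Qed.

Section Compactness.
Variables (I : Type) (U : I -> glued -> Prop).
Hypothesis U_open : forall i, is_open (U i).
Hypothesis U_cover : forall w, exists i, U i w.

(* A Lebesgue number for a finite subcover of the compact piece [Z]. *)
Lemma glued_cover_near_Z : compact_space Z ->
  exists rho l, 0 < rho /\
    forall w z, glued_dist (inl z) w < rho -> exists i, In i l /\ U i w.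
Proof.
  intros HZ.
  pose (V := fun (p : I * R * Z) (z : Z) =>
    let '(i, r, z1) := p in
    (0 < r /\ forall w, glued_dist (inl z1) w < r -> U i w) /\ dist z1 z < r / 2).
  assert (V_open : forall p, is_open (V p)).
  { intros [[i r] z1] z [Hr Hz]. exists (r / 2 - dist z1 z). split; [lra|].
    intros z' Hz'. split; auto. pose proof (dist_tri _ z1 z z'). lra. }
  assert (V_cover : forall z, exists p, V p z).
  { intros z. destruct (U_cover (inl z)) as [i Hi]. destruct (U_open i _ Hi) as [r [Hr Hball]].
    exists (i, r, z). simpl. rewrite dist_refl. split; [split; auto | lra]. }
  destruct (HZ _ V V_open V_cover) as [l Hl].
  destruct (list_lower_bound (fun p : I * R * Z => snd (fst p) / 2) l) as [rho [Hrho Hmin]].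
  exists rho, (map (fun p : I * R * Z => fst (fst p)) l). split; auto.
  intros w z Hzw. destruct (Hl z) as [[[i r] z1] [Hin [[Hr Hball] Hz1z]]].
  exists i. split; [exact (in_map (fun p : I * R * Z => fst (fst p)) _ _ Hin)|].
  apply Hball. pose proof (glued_dist_tri (inl z1) (inl z) w).
  assert (rho <= r / 2) by (apply (Hmin _ Hin); simpl; lra).
  simpl in *. lra.
Qed.

Lemma glued_cover_initial_pieces : (forall n, compact_space (Y n)) ->
  forall N, exists l, forall n, (n < N)%nat -> forall y : Y n,
    exists i, In i l /\ U i (inr (existT _ n y)).
Proof.
  intros HY N. induction N as [|N [l IH]].
  - exists nil. intros n Hn. lia.
  - destruct (HY N I (fun i y => U i (inr (existT _ N y)))) as [lN HlN].
    + intros i. apply (is_open_preimage (W := glued)); [|apply U_open].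
      apply isometric_embedding_nonexpansive, glued_inr_isometric.
    + intros y. apply U_cover.
    + exists (lN ++ l). intros n Hn y. destruct (Nat.eq_dec n N) as [->|nN].
      * destruct (HlN y) as [i [Hi HU]]. exists i. split; [apply in_or_app|]; auto.
      * destruct (IH n ltac:(lia) y) as [i [Hi HU]]. exists i. split; [apply in_or_app|]; auto.
Qed.

End Compactness.

Theorem glued_compact :
  compact_space Z -> (forall n, compact_space (Y n)) ->
  (forall rho, 0 < rho -> exists N, forall n, (N <= n)%nat -> forall y : Y n,
     exists z, δ n y z < rho) ->
  compact_space glued.
Proof.
  intros HZ HY Hnear I U U_open U_cover.
  destruct (glued_cover_near_Z I U U_open U_cover HZ) as (rho & l & Hrho & Hl).
  destruct (Hnear rho Hrho) as [N HN].
  destruct (glued_cover_initial_pieces I U U_open U_cover HY N) as [l' Hl'].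
  exists (l ++ l'). intros [z|[n y]].
  - destruct (Hl (inl z) z) as [i [Hi HU]]; [simpl; rewrite dist_refl; lra|].
    exists i. split; [apply in_or_app|]; auto.
  - destruct (Compare_dec.le_lt_dec N n) as [HNn|HnN].
    + destruct (HN n HNn y) as [z Hz]. destruct (Hl (inr (existT _ n y)) z Hz) as [i [Hi HU]].
      exists i. split; [apply in_or_app|]; auto.
    + destruct (Hl' n HnN y) as [i [Hi HU]]. exists i. split; [apply in_or_app|]; auto.
Qed.

End Gluing.

Definition common_embedding_cv (Xn : nat -> GHPU) (X : GHPU) : Prop :=
  exists (W : MetricSpace) (i : gspace X -> W) (iN : forall n, gspace (Xn n) -> W),
    compact_space W /\ isometric_embedding i /\ (forall n, isometric_embedding (iN n)) /\
    Rbar_cv0 (fun n => hausdorff_dist (image (iN n)) (image i)) /\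
    Rbar_cv0 (fun n => prokhorov_dist (pushforward (iN n) (gmu (Xn n))) (pushforward i (gmu X))) /\
    Rbar_cv0 (fun n => sup_curve_dist (fun t => iN n (geta (Xn n) t)) (fun t => i (geta X t))).

Lemma ghpu_cv0_of_common_embedding (Xn : nat -> GHPU) (X : GHPU) :
  common_embedding_cv Xn X -> Rbar_cv0 (fun n => ghpu_dist (Xn n) X).
Proof.
  intros (W & i & iN & HW & Hi & HiN & Hh & Hp & Hs).
  apply Rbar_cv0_of_le; [intros n; apply ghpu_dist_ge0|]. intros eps Heps.
  destruct (Rbar_cv0_finite _ Hh (eps / 3)) as [N1 HN1]; [lra|].
  destruct (Rbar_cv0_finite _ Hp (eps / 3)) as [N2 HN2]; [lra|].
  destruct (Rbar_cv0_finite _ Hs (eps / 3)) as [N3 HN3]; [lra|].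
  exists (N1 + N2 + N3)%nat. intros n Hn.
  destruct (HN1 n ltac:(lia)) as [h [Eh Hh']].
  destruct (HN2 n ltac:(lia)) as [p [Ep Hp']].
  destruct (HN3 n ltac:(lia)) as [s [Es Hs']].
  eapply Rbar_le_trans; [exact (ghpu_dist_le_embedding _ _ W (iN n) i h p s HW (HiN n) Hi Eh Ep Es)|].
  simpl. lra.
Qed.

Lemma ghpu_close_eventually (Xn : nat -> GHPU) (X : GHPU)
    (δ : forall n, gspace (Xn n) -> gspace X -> R) (h : nat -> R) :
  (forall n, cross_metric (δ n)) ->
  (forall n g, ghpu_dist (Xn n) X = Finite g -> ghpu_close (Xn n) X (δ n) (g + h n)) ->
  (forall eps, 0 < eps -> exists N, forall n, (N <= n)%nat -> h n < eps) ->
  Rbar_cv0 (fun n => ghpu_dist (Xn n) X) ->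
  forall eps, 0 < eps -> exists N, forall n, (N <= n)%nat -> ghpu_close (Xn n) X (δ n) eps.
Proof.
  intros Hδ Hclose Hh Hcv eps Heps.
  destruct (Rbar_cv0_finite _ Hcv (eps / 2)) as [N1 HN1]; [lra|].
  destruct (Hh (eps / 2)) as [N2 HN2]; [lra|].
  exists (N1 + N2)%nat. intros n Hn.
  destruct (HN1 n ltac:(lia)) as [g [Eg Hg]]. specialize (HN2 n ltac:(lia)).
  apply (ghpu_close_mono _ _ _ (g + h n)); auto. lra.
Qed.

Lemma common_embedding_of_close (Xn : nat -> GHPU) (X : GHPU)
    (δ : forall n, gspace (Xn n) -> gspace X -> R) (c : nat -> R)
    (c_pos : forall n, 0 < c n) (c_le_δ : forall n x y, c n <= δ n x y)
    (δ_cross : forall n, cross_metric (δ n)) :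
  (forall eps, 0 < eps -> exists N, forall n, (N <= n)%nat -> ghpu_close (Xn n) X (δ n) eps) ->
  common_embedding_cv Xn X.
Proof.
  intros Hclose.
  pose (W := glued (fun n => gspace (Xn n)) (gspace X) (geta X 0) δ c c_pos c_le_δ δ_cross).
  exists W, (fun y => inl y), (fun n x => inr (existT _ n x)).
  split; [|split; [apply glued_inl_isometric | split; [exact (glued_inr_isometric _ _ _ _ _ c_pos c_le_δ δ_cross)|]]].
  - apply glued_compact; [apply gcompact | intros n; apply gcompact|].
    intros rho Hrho. destruct (Hclose rho Hrho) as [N HN]. exists N. intros n Hn.
    apply (HN n Hn).
  - split; [|split]; apply Rbar_cv0_of_le;
      auto using hausdorff_dist_ge0, prokhorov_dist_ge0, sup_curve_dist_ge0;
      intros eps Heps; destruct (Hclose eps Heps) as [N HN]; exists N; intros n Hn.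
    + apply hausdorff_dist_le_of_close; auto.
    + apply prokhorov_dist_le_of_close; auto.
      * exact (glued_inr_isometric _ _ _ _ _ c_pos c_le_δ δ_cross n).
      * apply glued_inl_isometric.
    + exact (sup_curve_dist_le_of_close (Xn n) X W (fun x => inr (existT _ n x)) inl eps (HN n Hn)).
Qed.

Lemma common_embedding_of_ghpu_cv0 (Xn : nat -> GHPU) (X : GHPU) :
  Rbar_cv0 (fun n => ghpu_dist (Xn n) X) -> common_embedding_cv Xn X.
Proof.
  intros Hcv.
  pose (c := fun n : nat => / (INR n + 1)).
  assert (c_pos : forall n, 0 < c n).
  { intros n. apply Rinv_0_lt_compat. pose proof (pos_INR n). lra. }
  destruct (dependent_choice
              (fun n (δ : gspace (Xn n) -> gspace X -> R) => cross_metric δ /\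
                 forall g, ghpu_dist (Xn n) X = Finite g -> ghpu_close (Xn n) X δ (g + c n))
              (fun n => near_optimal_cross_metric (Xn n) X (c n) (c_pos n))) as [δ Hδ].
  (* Shifting by [c n] separates the copies of [Xn n] and [X] at a cost vanishing as n grows. *)
  assert (δc_cross : forall n, cross_metric (fun x y => δ n x y + c n)).
  { intros n. apply cross_metric_shift; [apply Rlt_le, c_pos | apply Hδ]. }
  apply (common_embedding_of_close Xn X (fun n x y => δ n x y + c n) c c_pos); auto.
  - intros n x y. pose proof (cross_metric_ge0 _ x y (proj1 (Hδ n))). lra.
  - apply (ghpu_close_eventually Xn X _ (fun n => c n + c n)); auto.
    + intros n g Eg. rewrite <- Rplus_assoc.
      apply ghpu_close_shift; [apply Rlt_le, c_pos | apply Hδ, Eg].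
    + intros eps Heps. destruct (inv_INR_succ_small (eps / 2)) as [N HN]; [lra|].
      exists N. intros n Hn. specialize (HN n Hn). unfold c. lra.
Qed.

Theorem proposition1p5 (Xn : nat -> GHPU) (X : GHPU) :
  Rbar_cv0 (fun n => ghpu_dist (Xn n) X) <->
  exists (W : MetricSpace) (i : gspace X -> W) (iN : forall n, gspace (Xn n) -> W),
    compact_space W /\ isometric_embedding i /\ (forall n, isometric_embedding (iN n)) /\
    Rbar_cv0 (fun n => hausdorff_dist (image (iN n)) (image i)) /\
    Rbar_cv0 (fun n => prokhorov_dist (pushforward (iN n) (gmu (Xn n))) (pushforward i (gmu X))) /\
    Rbar_cv0 (fun n => sup_curve_dist (fun t => iN n (geta (Xn n) t)) (fun t => i (geta X t))).
Proof.
  split; [apply common_embedding_of_ghpu_cv0 | apply ghpu_cv0_of_common_embedding].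
Qed.
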